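(* Let $k\ge2$, let $\Pi\subsetneq\Sigma_k$ be a proper subshift, and let $T:\Pi\to\Sigma_k$ be the map constructed below. Then for every $y\in\Pi$, $\omega_{B^*}(T(y))\subseteq\Pi\subsetneq\omega_\sigma(T(y))$. In particular $T(y)\in Rec(\Sigma_k)\setminus BR(\Sigma_k)$.
   Context: $\Sigma_k=\{0,\dots,k-1\}^{\mathbb{N}}$ with metric $d(x,y)=\sum_{n\ge1}\delta(x_n,y_n)/2^n$ ($\delta(a,b)=0$ if $a=b$, $1$ otherwise) and shift $\sigma$. A subshift is a nonempty closed $\sigma$-invariant subset. A finite word $A$ is contained in $\Pi$ if it is a prefix of some point of $\Pi$. Construction of $T$: enumerate all finite words contained in $\Pi$ as $C_1,C_2,\dots$; fix a finite word $A_1$ not contained in $\Pi$; for $y\in\Pi$ let $Y_n$ be its first $n$ symbols; set $B_n=C_nY_nY_n\cdots Y_n$ ($Y_n$ repeated $|A_n|^2$ times) and $A_{n+1}=A_nB_nA_n$; $T(y)$ is the point of $\Sigma_k$ having every $A_n$ as a prefix. The construction requires $|C_n|=o(|A_n|)$ as $n\to\infty$. $N(x,U)=\{n\ge1:\sigma^nx\in U\}$; $B^*(S)=\limsup_{|I|\to\infty}|S\cap I|/|I|$ over intervals of consecutive integers; $\omega_{B^*}(x)=\{z: B^*(N(x,B_\varepsilon(z)))>0\ \forall\varepsilon>0\}$; $\omega_\sigma(x)$ is the $\omega$-limit set. $x\in Rec$ if $N(x,B_\varepsilon(x))\ne\emptyset$ for all $\varepsilon>0$; $x\in BR$ if $B^*(N(x,B_\varepsilon(x)))>0$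 for all $\varepsilon>0$. *)

From Stdlib Require Import Reals List Arith ClassicalDescription.
From Coquelicot Require Import Coquelicot.
Open Scope R_scope.

(* Points of the full shift: x : nat -> nat; x n is the paper's x_{n+1}. *)
Definition point := nat -> nat.
Definition word := list nat.

Definition InSigma (k : nat) (x : point) : Prop := forall n, (x n < k)%nat.

Definition dist (x y : point) : R :=
  Series (fun n => if Nat.eq_dec (x n) (y n) then 0 else / 2 ^ (S n)).

Definition shift (x : point) : point := fun n => x (S n).
Definition shift_iter (n : nat) (x : point) : point := fun i => x (n + i)%nat.

Definition is_subshift (k : nat) (Pi : point -> Prop) : Prop :=
  (forall x, Pi x -> InSigma k x) /\
  (exists x, Pi x) /\
  (forall x, InSigma k x ->
     (forall eps, 0 < eps -> exists p, Pi p /\ dist x p < eps) -> Pi x) /\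
  (forall x, Pi x -> Pi (shift x)).

Definition proper_subshift (k : nat) (Pi : point -> Prop) : Prop :=
  is_subshift k Pi /\ exists x, InSigma k x /\ ~ Pi x.

Definition is_prefix (w : word) (x : point) : Prop :=
  forall i, (i < length w)%nat -> List.nth i w 0%nat = x i.

Definition contained (Pi : point -> Prop) (w : word) : Prop :=
  exists p, Pi p /\ is_prefix w p.

Definition word_over (k : nat) (w : word) : Prop := List.Forall (fun a => (a < k)%nat) w.

Definition first_syms (y : point) (n : nat) : word := List.map y (List.seq 0 n).

Fixpoint repeat_word (w : word) (m : nat) : word :=
  match m with O => nil | S m' => w ++ repeat_word w m' end.

(* Aseq C y A1 n is the paper's A_{n+1}; C n is the paper's C_{n+1}.
   A_{n+1} = A_n B_n A_n, B_n = C_n Y_n^{|A_n|^2}, Y_n = first n symbols of y. *)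
Fixpoint Aseq (C : nat -> word) (y : point) (A1 : word) (n : nat) : word :=
  match n with
  | O => A1
  | S m => let a := Aseq C y A1 m in
           a ++ (C m ++ repeat_word (first_syms y (S m)) (length a * length a)) ++ a
  end.

(* T(y): the point having every A_n as prefix (|A_{n+1}| >= 2^n > n) *)
Definition Tmap (C : nat -> word) (A1 : word) (y : point) : point :=
  fun i => List.nth i (Aseq C y A1 (S i)) 0%nat.

Definition Nset (x : point) (U : point -> Prop) : nat -> Prop :=
  fun n => (1 <= n)%nat /\ U (shift_iter n x).

Definition ball (k : nat) (z : point) (eps : R) : point -> Prop :=
  fun w => InSigma k w /\ dist w z < eps.

Fixpoint cnt (P : nat -> Prop) (m L : nat) : R :=
  match L with
  | O => 0
  | Datatypes.S L' => cnt P m L' + (if excluded_middle_informative (P (m + L')%nat) then 1 else 0)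
  end.

Definition upper_banach (S : nat -> Prop) : Rbar :=
  LimSup_seq (fun L => real (Sup_seq (fun m => Finite (cnt S m L / INR L)))).

Definition omega_B (k : nat) (x : point) : point -> Prop :=
  fun z => InSigma k z /\
    forall eps, 0 < eps -> Rbar_lt (Finite 0) (upper_banach (Nset x (ball k z eps))).

Definition omega_sigma (k : nat) (x : point) : point -> Prop :=
  fun z => InSigma k z /\
    forall eps, 0 < eps -> forall N, exists n, (N <= n)%nat /\ dist (shift_iter n x) z < eps.

Definition Rec (k : nat) (x : point) : Prop :=
  InSigma k x /\ forall eps, 0 < eps -> exists n, Nset x (ball k x eps) n.

Definition BR (k : nat) (x : point) : Prop :=
  InSigma k x /\
  forall eps, 0 < eps -> Rbar_lt (Finite 0) (upper_banach (Nset x (ball k x eps))).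

From Pilot Require Import Defs.
From Stdlib Require Import Reals List Arith.
From Coquelicot Require Import Coquelicot.
From Stdlib Require Import Lia Lra ClassicalDescription FunctionalExtensionality Classical.
Open Scope R_scope.

(* Every C_n and every Y_n is a word of Pi, so a word W not contained in Pi can occur in
   T(y) inside B_n = C_n Y_n ... Y_n only across the boundaries of these pieces: at most
   |W| times per piece of length n + 1. Since |B_n| >= |A_n|^2, the doubling
   A_{n+1} = A_n B_n A_n propagates a density bound 1/D from the blocks B_n (n >= m) to
   every window of T(y), up to an additive constant depending on |A_m|. Hence a cylinder
   around a point outside Pi is visited with upper Banach density 0, and
   omega_B(T y) is contained in Pi. Conversely T(y) reads every C_n, i.e. every word of Pi,
   at position |A_n|, and reads A_n again at position |A_n| + |B_n|; so
   Pi is contained in omega_sigma(T y), and T(y), which begins with A_1 and is thus not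
   in Pi, is recurrent and lies in omega_sigma(T y). *)

Fixpoint cnt_nat (P : nat -> Prop) (m L : nat) : nat :=
  match L with
  | O => O
  | S L' => (cnt_nat P m L' + (if excluded_middle_informative (P (m + L')%nat) then 1 else 0))%nat
  end.

Lemma cnt_cnt_nat P m L : cnt P m L = INR (cnt_nat P m L).
Proof.
  induction L as [|L IHL]; simpl; auto.
  rewrite IHL, plus_INR. destruct excluded_middle_informative; simpl; lra.
Qed.

Section Counting.
Local Open Scope nat_scope.

Lemma cnt_nat_le P m L : cnt_nat P m L <= L.
Proof. induction L; simpl; auto. destruct excluded_middle_informative; lia. Qed.

Lemma cnt_nat_add P m a b : cnt_nat P m (a + b) = cnt_nat P m a + cnt_nat P (m + a) b.
Proof.
  induction b as [|b IHb]; simpl; [rewrite Nat.add_0_r; lia|].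
  rewrite Nat.add_succ_r; simpl. rewrite IHb.
  replace (m + a + b) with (m + (a + b)) by lia. lia.
Qed.

Lemma cnt_nat_mono P Q m L :
  (forall q, m <= q < m + L -> P q -> Q q) -> cnt_nat P m L <= cnt_nat Q m L.
Proof.
  induction L as [|L IHL]; simpl; intros H; auto.
  assert (IH := IHL ltac:(intros q Hq; apply H; lia)).
  destruct (excluded_middle_informative (P (m + L))) as [HP|HP];
  destruct (excluded_middle_informative (Q (m + L))) as [HQ|HQ]; try lia.
  exfalso. apply HQ, H; auto; lia.
Qed.

Lemma cnt_nat_le_from P m L T :
  (forall q, m <= q < m + L -> P q -> T <= q) -> cnt_nat P m L <= m + L - T.
Proof.
  induction L as [|L IHL]; simpl; intros H; [lia|].
  assert (IH := IHL ltac:(intros q Hq; apply H; lia)).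
  destruct (excluded_middle_informative (P (m + L))) as [HP|HP]; try lia.
  assert (T <= m + L) by (apply H; auto; lia). lia.
Qed.

Definition cnt_range P s e := cnt_nat P s (e - s).

Lemma cnt_range_split P s t e :
  s <= t -> t <= e -> cnt_range P s e = cnt_range P s t + cnt_range P t e.
Proof.
  intros. unfold cnt_range. replace (e - s) with ((t - s) + (e - t)) by lia.
  rewrite cnt_nat_add. replace (s + (t - s)) with t by lia. reflexivity.
Qed.

Lemma cnt_range_le P s e : cnt_range P s e <= e - s.
Proof. apply cnt_nat_le. Qed.

Lemma cnt_range_le_from P s e T :
  s <= e -> (forall q, s <= q < e -> P q -> T <= q) -> cnt_range P s e <= e - T.
Proof.
  intros He H. unfold cnt_range. eapply Nat.le_trans.
  - apply cnt_nat_le_from. intros q Hq; apply H; lia.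
  - lia.
Qed.

End Counting.

Lemma ratio_le_of_mul_le (c L D K : nat) :
  (1 <= D)%nat -> (K < L)%nat -> (D * c <= L + K)%nat -> INR c / INR L <= 2 / INR D.
Proof.
  intros HD HL H.
  assert (HL0 : 0 < INR L) by (apply lt_0_INR; lia).
  assert (HD0 : 0 < INR D) by (apply lt_0_INR; lia).
  assert (H2 : INR D * INR c <= 2 * INR L).
  { rewrite <- mult_INR. replace 2 with (INR 2) by (simpl; lra). rewrite <- mult_INR.
    apply le_INR. lia. }
  apply (Rmult_le_reg_r (INR L * INR D)); [nra|].
  field_simplify; nra.
Qed.

Lemma upper_banach_not_pos (S : nat -> Prop) :
  (forall D, (1 <= D)%nat -> exists K, forall s I, (D * cnt_nat S s I <= I + K)%nat) ->
  ~ Rbar_lt 0 (upper_banach S).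
Proof.
  intros HD Hlt.
  assert (Hb : forall D, (1 <= D)%nat -> Rbar_le (upper_banach S) (2 / INR D)).
  { intros D HD1. destruct (HD D HD1) as [K HK].
    unfold upper_banach. rewrite <- (LimSup_seq_const (2 / INR D)).
    apply LimSup_le. exists (Datatypes.S K). intros L HL.
    assert (Hr : forall m, cnt S m L / INR L <= 2 / INR D).
    { intros m. rewrite cnt_cnt_nat. apply (ratio_le_of_mul_le _ _ _ K); auto. }
    assert (Hup : Rbar_le (Sup_seq (fun m => Finite (cnt S m L / INR L))) (2 / INR D)).
    { apply Rbar_not_lt_le. intros Hc. apply Sup_seq_minor_lt in Hc. destruct Hc as [n Hn].
      simpl in Hn. specialize (Hr n). lra. }
    assert (Hlo : Rbar_le 0 (Sup_seq (fun m => Finite (cnt S m L / INR L)))).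
    { apply (Sup_seq_minor_le _ 0 0). simpl. rewrite cnt_cnt_nat.
      apply Rdiv_le_0_compat; [apply pos_INR | apply lt_0_INR; lia]. }
    destruct (Sup_seq (fun m => Finite (cnt S m L / INR L))); simpl in *; tauto. }
  destruct (upper_banach S) as [l| |]; simpl in Hlt; try tauto.
  - destruct (archimed_cor1 (l / 2) ltac:(lra)) as [N [HN1 HN2]].
    specialize (Hb N ltac:(lia)). simpl in Hb.
    assert (0 < INR N) by (apply lt_0_INR; lia).
    assert (2 / INR N < l) by (replace (2 / INR N) with (2 * / INR N) by (unfold Rdiv; ring); lra).
    lra.
  - specialize (Hb 1%nat ltac:(lia)). simpl in Hb. tauto.
Qed.

Definition half_pow (n : nat) : R := / 2 ^ (S n).

Lemma half_pow_pos n : 0 < half_pow n.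
Proof. unfold half_pow. apply Rinv_0_lt_compat, pow_lt; lra. Qed.

Lemma is_series_half_pow : is_series half_pow 1.
Proof.
  assert (Habs : Rabs (/2) < 1) by (rewrite Rabs_right; lra).
  assert (H := is_series_scal_l (/2) _ _ (is_series_geom (/2) Habs)).
  replace 1 with (scal (/2) (/(1 - /2))).
  2:{ unfold scal; simpl; unfold mult; simpl. field. }
  eapply is_series_ext; [|exact H].
  intros n. unfold half_pow, scal; simpl. unfold mult; simpl.
  rewrite pow_inv. field. apply pow_nonzero; lra.
Qed.

Definition dist_term (u v : point) n : R :=
  if Nat.eq_dec (u n) (v n) then 0 else / 2 ^ (S n).

Lemma dist_term_bounds u v n : 0 <= dist_term u v n <= half_pow n.
Proof.
  unfold dist_term. pose proof (half_pow_pos n). unfold half_pow in *.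
  destruct Nat.eq_dec; lra.
Qed.

Lemma ex_series_dist_term u v : ex_series (dist_term u v).
Proof.
  apply (@ex_series_le R_AbsRing R_CompleteNormedModule _ half_pow).
  - intros n. unfold norm; simpl. unfold abs; simpl.
    destruct (dist_term_bounds u v n). rewrite Rabs_right; lra.
  - eexists; apply is_series_half_pow.
Qed.

Lemma dist_le_of_agree (u v : point) (L : nat) :
  (forall i, (i < L)%nat -> u i = v i) -> Defs.dist u v <= / 2 ^ L.
Proof.
  intros H. unfold Defs.dist. fold (dist_term u v).
  rewrite (Series_incr_n_aux _ L).
  2:{ intros n Hn. unfold dist_term. destruct Nat.eq_dec; auto. exfalso; auto. }
  eapply Rle_trans. apply (Series_le _ (fun n => / 2 ^ L * half_pow n)).
  - intros n. destruct (dist_term_bounds u v (L + n)). split; auto. eapply Rle_trans; eauto.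
    unfold half_pow. rewrite <- Rinv_mult.
    replace (S (L + n)) with (L + S n)%nat by lia. rewrite pow_add. apply Rle_refl.
  - exists (scal (/ 2 ^ L) 1).
    exact (is_series_scal_l (/ 2 ^ L) _ _ is_series_half_pow).
  - rewrite Series_scal_l, (is_series_unique _ _ is_series_half_pow). lra.
Qed.

Lemma agree_of_dist_lt (u v : point) (L : nat) :
  Defs.dist u v < / 2 ^ L -> forall i, (i < L)%nat -> u i = v i.
Proof.
  intros Hd i Hi. destruct (Nat.eq_dec (u i) (v i)) as [E|E]; auto. exfalso.
  unfold Defs.dist in Hd. fold (dist_term u v) in Hd.
  rewrite (Series_incr_n _ (S i)) in Hd by (lia || apply ex_series_dist_term).
  simpl pred in Hd.
  assert (Hhead : dist_term u v i <= sum_f_R0 (dist_term u v) i).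
  { destruct i as [|i]; simpl; [lra|].
    pose proof (cond_pos_sum (dist_term u v) i (fun n => proj1 (dist_term_bounds u v n))). lra. }
  assert (Htail : 0 <= Series (fun n => dist_term u v (S i + n))).
  { replace 0 with (Series (fun n => 0 * half_pow n)) by (rewrite Series_scal_l; ring).
    apply Series_le.
    - intros n. pose proof (dist_term_bounds u v (S i + n)). lra.
    - apply (ex_series_incr_n (dist_term u v) (S i)), ex_series_dist_term. }
  assert (Hterm : dist_term u v i = / 2 ^ S i) by (unfold dist_term; destruct Nat.eq_dec; tauto).
  assert (/ 2 ^ L <= / 2 ^ S i).
  { apply Rinv_le_contravar; [apply pow_lt; lra | apply Rle_pow; [lra | lia]]. }
  lra.
Qed.

Lemma dist_lt_of_agree eps : 0 < eps ->
  exists L, forall u v : point, (forall i, (i < L)%nat -> u i = v i) -> Defs.dist u v < eps.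
Proof.
  intros He. destruct (archimed_cor1 eps He) as [L [HL1 HL2]].
  exists L. intros u v Huv.
  eapply Rle_lt_trans; [apply (dist_le_of_agree _ _ L Huv)|].
  eapply Rle_lt_trans; [|exact HL1]. apply Rinv_le_contravar; [apply lt_0_INR; lia|].
  clear. induction L as [|L IHL]; [simpl; lra|].
  rewrite S_INR. simpl. pose proof (pow_le 2 L ltac:(lra)).
  pose proof (Rle_pow 2 0 L ltac:(lra) ltac:(lia)). simpl in *. lra.
Qed.

Section DoublingDensity.
Local Open Scope nat_scope.

Variables (P : nat -> Prop) (a b : nat -> nat) (L D m : nat).
Hypothesis a_S : forall n, a (S n) = a n + b n + a n.
Hypothesis sq_le_b : forall n, a n * a n <= b n.
Hypothesis a_m_large : 8 * D + 12 * D * L <= a m.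

Definition sparse_block n u := forall s e, u <= s -> s <= e -> e <= u + b n ->
  4 * D * cnt_range P s e <= (e - s) + 12 * D * L.

(* The four bounds are proved together by induction on n: a window of A_{n+1} = A_n B_n A_n
   meeting B_n splits into a suffix of A_n, part of B_n and a prefix of A_n, and the density
   1/(2D) of a full copy of A_n absorbs the additive error of B_n. *)
Definition full_bound n p := 2 * D * cnt_range P p (p + a n) <= a n + 2 * D * a m.

Definition suffix_bound n p := forall s, p <= s <= p + a n ->
  D * cnt_range P s (p + a n) <= (p + a n - s) + (D * a m + 3 * D * L).

Definition prefix_bound n p := forall e, p <= e <= p + a n ->
  D * cnt_range P p e <= (e - p) + (D * a m + 3 * D * L).

Definition window_bound n p := forall s e, p <= s -> s <= e -> e <= p + a n ->
  D * cnt_range P s e <= (e - s) + (D * a m + 6 * D * L).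

Lemma a_mono n : m <= n -> a m <= a n.
Proof. induction 1; auto. rewrite a_S; lia. Qed.

Lemma b_ge_a n : m <= n -> 4 * D * a n <= b n.
Proof.
  intros Hn. pose proof (a_mono n Hn). pose proof (sq_le_b n).
  assert (4 * D * a n <= a n * a n) by (apply Nat.mul_le_mono_r; lia). lia.
Qed.

Lemma b_ge_a_m n : m <= n -> 4 * D * a m + 12 * D * L <= b n.
Proof.
  intros Hn. pose proof (a_mono n Hn). pose proof (sq_le_b n).
  assert (a m * a m <= a n * a n) by (apply Nat.mul_le_mono; lia).
  destruct (a m) as [|am]; [lia|].
  assert (S am * (4 * D + 12 * D * L) <= S am * S am) by (apply Nat.mul_le_mono_l; lia).
  nia.
Qed.

Lemma cnt_range_mul_le s e c : s <= e -> e - s <= c -> D * cnt_range P s e <= D * c.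
Proof. intros. apply Nat.mul_le_mono_l. pose proof (cnt_range_le P s e). lia. Qed.

Lemma bounds_base p :
  full_bound m p /\ suffix_bound m p /\ prefix_bound m p /\ window_bound m p.
Proof.
  unfold full_bound, suffix_bound, prefix_bound, window_bound.
  repeat split; intros;
    [ pose proof (cnt_range_mul_le p (p + a m) (a m))
    | pose proof (cnt_range_mul_le s (p + a m) (a m))
    | pose proof (cnt_range_mul_le p e (a m))
    | pose proof (cnt_range_mul_le s e (a m)) ]; lia.
Qed.

Section Step.
Variables (n p : nat).
Hypothesis n_ge : m <= n.
Hypothesis block_sparse : sparse_block n (p + a n).

Lemma full_bound_S : full_bound n p -> full_bound n (p + a n + b n) -> full_bound (S n) p.
Proof.
  unfold full_bound. intros F1 F2. pose proof (b_ge_a_m n n_ge).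
  rewrite a_S. replace (p + (a n + b n + a n)) with (p + a n + b n + a n) by lia.
  rewrite (cnt_range_split P p (p + a n) _), (cnt_range_split P (p + a n) (p + a n + b n)) by lia.
  specialize (block_sparse (p + a n) (p + a n + b n) ltac:(lia) ltac:(lia) ltac:(lia)).
  lia.
Qed.

Lemma suffix_bound_S : full_bound n (p + a n + b n) -> suffix_bound n (p + a n + b n) ->
  suffix_bound (S n) p.
Proof.
  unfold full_bound, suffix_bound. intros F2 S2 s Hs.
  pose proof (b_ge_a n n_ge). set (p2 := p + a n + b n) in *.
  replace (p + a (S n)) with (p2 + a n) in * by (rewrite a_S; unfold p2; lia).
  destruct (le_lt_dec p2 s); [apply S2; lia|].
  rewrite (cnt_range_split P s p2) by lia.
  destruct (le_lt_dec (p + a n) s).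
  - specialize (block_sparse s p2 ltac:(lia) ltac:(lia) ltac:(unfold p2; lia)). lia.
  - rewrite (cnt_range_split P s (p + a n) p2) by lia.
    specialize (block_sparse (p + a n) p2 ltac:(lia) ltac:(lia) ltac:(unfold p2; lia)).
    pose proof (cnt_range_mul_le s (p + a n) (a n)). lia.
Qed.

Lemma prefix_bound_S : full_bound n p -> prefix_bound n p -> prefix_bound (S n) p.
Proof.
  unfold full_bound, prefix_bound. intros F1 P1 e He.
  pose proof (b_ge_a n n_ge). set (p2 := p + a n + b n) in *.
  replace (p + a (S n)) with (p2 + a n) in * by (rewrite a_S; unfold p2; lia).
  destruct (le_lt_dec e (p + a n)); [apply P1; lia|].
  rewrite (cnt_range_split P p (p + a n) e) by lia.
  destruct (le_lt_dec e p2).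
  - specialize (block_sparse (p + a n) e ltac:(lia) ltac:(lia) ltac:(unfold p2 in *; lia)). lia.
  - rewrite (cnt_range_split P (p + a n) p2 e) by lia.
    specialize (block_sparse (p + a n) p2 ltac:(lia) ltac:(lia) ltac:(unfold p2; lia)).
    pose proof (cnt_range_mul_le p2 e (a n)). lia.
Qed.

Lemma window_bound_S :
  suffix_bound n p -> window_bound n p ->
  prefix_bound n (p + a n + b n) -> window_bound n (p + a n + b n) ->
  window_bound (S n) p.
Proof.
  unfold suffix_bound, prefix_bound, window_bound. intros S1 G1 P2 G2 s e Hs Hse He.
  pose proof (b_ge_a n n_ge). set (p1 := p + a n) in *. set (p2 := p1 + b n) in *.
  replace (p + a (S n)) with (p2 + a n) in * by (rewrite a_S; unfold p2, p1; lia).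
  assert (p1 <= p2) by (unfold p2; lia).
  destruct (le_lt_dec e p1); [apply G1; lia|].
  destruct (le_lt_dec p2 s); [apply G2; lia|].
  destruct (le_lt_dec p1 s), (le_lt_dec e p2).
  - specialize (block_sparse s e ltac:(lia) ltac:(lia) ltac:(unfold p2 in *; lia)). lia.
  - rewrite (cnt_range_split P s p2 e) by lia.
    specialize (block_sparse s p2 ltac:(lia) ltac:(lia) ltac:(unfold p2; lia)).
    specialize (P2 e ltac:(lia)). lia.
  - rewrite (cnt_range_split P s p1 e) by lia.
    specialize (block_sparse p1 e ltac:(lia) ltac:(lia) ltac:(unfold p2 in *; lia)).
    specialize (S1 s ltac:(lia)). lia.
  - rewrite (cnt_range_split P s p1 e), (cnt_range_split P p1 p2 e) by lia.
    specialize (block_sparse p1 p2 ltac:(lia) ltac:(lia) ltac:(unfold p2; lia)).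
    pose proof (cnt_range_mul_le s p1 (a n)). pose proof (cnt_range_mul_le p2 e (a n)). lia.
Qed.

End Step.

(* [A n p]: the level-n word occurs at p; [Blk n u]: the n-th middle block occurs at u. *)
Lemma window_density (A Blk : nat -> nat -> Prop)
  (A_S : forall n p, A (S n) p -> A n p /\ Blk n (p + a n) /\ A n (p + a n + b n))
  (Blk_sparse : forall n u, m <= n -> Blk n u -> sparse_block n u) :
  forall n, m <= n -> forall p, A n p -> forall s e, p <= s -> s <= e -> e <= p + a n ->
  D * cnt_range P s e <= (e - s) + (D * a m + 6 * D * L).
Proof.
  intros n Hn.
  enough (H : forall p, A n p ->
            full_bound n p /\ suffix_bound n p /\ prefix_bound n p /\ window_bound n p)
    by (intros p Hp; apply H, Hp).
  induction Hn as [|n Hn IH]; intros p Hp; [apply bounds_base|].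
  destruct (A_S n p Hp) as (A1 & B & A2).
  pose proof (Blk_sparse n _ Hn B) as HB.
  destruct (IH _ A1) as (F1 & S1 & P1 & G1), (IH _ A2) as (F2 & S2 & P2 & G2).
  repeat split.
  - apply full_bound_S; auto.
  - apply suffix_bound_S; auto.
  - apply prefix_bound_S; auto.
  - apply window_bound_S; auto.
Qed.

End DoublingDensity.

Definition occurs_at (x : point) (w : word) (p : nat) : Prop :=
  forall i, (i < length w)%nat -> x (p + i)%nat = nth i w 0%nat.

Section ForbiddenWord.
Local Open Scope nat_scope.

Lemma occurs_at_app x u v p :
  occurs_at x (u ++ v) p -> occurs_at x u p /\ occurs_at x v (p + length u).
Proof.
  intros H; split; intros i Hi.
  - rewrite H by (rewrite length_app; lia). rewrite app_nth1; auto.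
  - replace (p + length u + i) with (p + (length u + i)) by lia.
    rewrite H by (rewrite length_app; lia). rewrite app_nth2 by lia.
    f_equal; lia.
Qed.

Lemma length_repeat_word w r : length (repeat_word w r) = r * length w.
Proof. induction r as [|r IHr]; simpl; auto. rewrite length_app, IHr; lia. Qed.

Lemma density_bound_rescale l L D c d : 0 < l -> 4 * D * L <= l ->
  l * c <= L * d + 3 * L * l -> 4 * D * c <= d + 12 * D * L.
Proof.
  intros H0 H1 H2. destruct l as [|l]; [lia|].
  apply (Nat.mul_le_mono_pos_l _ _ (S l)); [lia|].
  assert (4 * D * (S l * c) <= 4 * D * (L * d + 3 * L * S l)) by (apply Nat.mul_le_mono_l; auto).
  assert (4 * D * L * d <= S l * d) by (apply Nat.mul_le_mono_r; auto).
  nia.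
Qed.

Variable Pi : point -> Prop.
Hypothesis Pi_shift : forall j p, Pi p -> Pi (shift_iter j p).

Lemma contained_inner_occurrence x w u v q :
  contained Pi w -> occurs_at x w u -> u <= q -> q + length v <= u + length w ->
  occurs_at x v q -> contained Pi v.
Proof.
  intros [p [Hp Hpre]] Hw Huq Hq Hv.
  exists (shift_iter (q - u) p). split; auto.
  intros i Hi. unfold shift_iter.
  rewrite <- Hv by auto. rewrite <- Hpre by lia.
  rewrite <- Hw by lia. f_equal; lia.
Qed.

Variables (x : point) (W : word).
Hypothesis W_forbidden : ~ contained Pi W.

(* Inside an occurrence of a word of Pi, W can only start within its last [length W] positions. *)
Lemma cnt_forbidden_in_contained w u s e :
  contained Pi w -> occurs_at x w u -> u <= s -> s <= e -> e <= u + length w ->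
  cnt_range (occurs_at x W) s e <= length W.
Proof.
  intros Hc Hw H1 H2 H3.
  eapply Nat.le_trans; [apply (cnt_range_le_from _ _ _ (u + length w + 1 - length W)); auto|lia].
  intros q Hq Hocc.
  destruct (le_lt_dec (q + length W) (u + length w)) as [Hl|Hl]; [|lia].
  exfalso. apply W_forbidden. apply (contained_inner_occurrence x w u W q); auto; lia.
Qed.

Lemma cnt_forbidden_in_repeat Y (HY : contained Pi Y) :
  forall r c, occurs_at x (repeat_word Y r) c ->
  (forall e, c <= e <= c + r * length Y ->
     length Y * cnt_range (occurs_at x W) c e <= length W * (e - c) + length W * length Y) /\
  (forall s e, c <= s -> s <= e -> e <= c + r * length Y ->
     length Y * cnt_range (occurs_at x W) s e <= length W * (e - s) + 2 * length W * length Y).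
Proof.
  set (L := length W). set (l := length Y).
  induction r as [|r IHr]; intros c Hc.
  - split; [intros e He | intros s e H1 H2 H3]; simpl in *;
      [assert (e = c) by lia | assert (e = s) by lia]; subst;
      unfold cnt_range; rewrite Nat.sub_diag; simpl; lia.
  - simpl in Hc. apply occurs_at_app in Hc. destruct Hc as [H1 H2].
    destruct (IHr _ H2) as [IP IG]. fold l in IP, IG.
    assert (Hseg : forall s e, c <= s -> s <= e -> e <= c + l ->
                     l * cnt_range (occurs_at x W) s e <= l * L).
    { intros s e A1 A2 A3. apply Nat.mul_le_mono_l. eapply cnt_forbidden_in_contained; eauto. }
    split.
    + intros e He. destruct (le_lt_dec e (c + l)).
      * specialize (Hseg c e ltac:(lia) ltac:(lia) ltac:(lia)). nia.
      * rewrite (cnt_range_split _ c (c + l) e) by lia.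
        specialize (Hseg c (c + l) ltac:(lia) ltac:(lia) ltac:(lia)).
        specialize (IP e ltac:(simpl; lia)).
        replace (e - c) with ((e - (c + l)) + l) by lia. nia.
    + intros s e A1 A2 A3.
      destruct (le_lt_dec (c + l) s); [apply IG; simpl in *; lia|].
      destruct (le_lt_dec e (c + l)).
      * specialize (Hseg s e ltac:(lia) ltac:(lia) ltac:(lia)). nia.
      * rewrite (cnt_range_split _ s (c + l) e) by lia.
        specialize (Hseg s (c + l) ltac:(lia) ltac:(lia) ltac:(lia)).
        specialize (IP e ltac:(simpl; lia)).
        assert (L * (e - (c + l)) <= L * (e - s)) by (apply Nat.mul_le_mono_l; lia).
        nia.
Qed.

Lemma cnt_forbidden_in_block Y w r u s e :
  contained Pi Y -> contained Pi w ->
  occurs_at x (w ++ repeat_word Y r) u -> u <= s -> s <= e ->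
  e <= u + length (w ++ repeat_word Y r) ->
  length Y * cnt_range (occurs_at x W) s e <= length W * (e - s) + 3 * length W * length Y.
Proof.
  intros HY Hw H A1 A2 A3. rewrite length_app, length_repeat_word in A3.
  apply occurs_at_app in H. destruct H as [H1 H2].
  destruct (cnt_forbidden_in_repeat Y HY r _ H2) as [IP IG].
  set (L := length W) in *. set (l := length Y) in *.
  assert (Hseg : forall s e, u <= s -> s <= e -> e <= u + length w ->
                   l * cnt_range (occurs_at x W) s e <= l * L).
  { intros s' e' B1 B2 B3. apply Nat.mul_le_mono_l. eapply cnt_forbidden_in_contained; eauto. }
  destruct (le_lt_dec e (u + length w)).
  - specialize (Hseg s e ltac:(lia) ltac:(lia) ltac:(lia)). nia.
  - destruct (le_lt_dec (u + length w) s).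
    + specialize (IG s e ltac:(lia) ltac:(lia) ltac:(lia)). nia.
    + rewrite (cnt_range_split _ s (u + length w) e) by lia.
      specialize (Hseg s (u + length w) ltac:(lia) ltac:(lia) ltac:(lia)).
      specialize (IP e ltac:(lia)).
      assert (L * (e - (u + length w)) <= L * (e - s)) by (apply Nat.mul_le_mono_l; lia).
      nia.
Qed.

End ForbiddenWord.

Lemma length_first_syms y n : length (first_syms y n) = n.
Proof. unfold first_syms. rewrite length_map, length_seq. reflexivity. Qed.

Lemma nth_first_syms y n i : (i < n)%nat -> nth i (first_syms y n) 0%nat = y i.
Proof.
  intros H. unfold first_syms.
  rewrite (nth_indep _ 0%nat (y 0%nat)) by (rewrite length_map, length_seq; auto).
  rewrite map_nth, seq_nth; auto.
Qed.

Lemma is_prefix_first_syms y n : is_prefix (first_syms y n) y.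
Proof. intros i Hi. rewrite length_first_syms in Hi. apply nth_first_syms, Hi. Qed.

Section Construction.
Local Open Scope nat_scope.

Variables (C : nat -> word) (y : point) (A1 : word).
Hypothesis A1_nonnil : A1 <> nil.

Definition alen n := length (Aseq C y A1 n).
Definition Bword n := C n ++ repeat_word (first_syms y (S n)) (alen n * alen n).

Lemma Aseq_S n : Aseq C y A1 (S n) = Aseq C y A1 n ++ Bword n ++ Aseq C y A1 n.
Proof. reflexivity. Qed.

Lemma alen_S n : alen (S n) = alen n + length (Bword n) + alen n.
Proof. unfold alen at 1. rewrite Aseq_S, !length_app. unfold alen. lia. Qed.

Lemma sq_alen_le_Bword n : alen n * alen n <= length (Bword n).
Proof. unfold Bword. rewrite length_app, length_repeat_word, length_first_syms. nia. Qed.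

Lemma alen_gt n : n < alen n.
Proof.
  induction n as [|n IHn].
  - unfold alen; simpl. destruct A1; simpl; [congruence | lia].
  - rewrite alen_S. lia.
Qed.

Lemma Aseq_prefix n n' : n <= n' -> exists t, Aseq C y A1 n' = Aseq C y A1 n ++ t.
Proof.
  induction 1 as [|n' _ [t Ht]].
  - exists nil. rewrite app_nil_r; auto.
  - exists (t ++ Bword n' ++ Aseq C y A1 n'). rewrite app_assoc, <- Ht. apply Aseq_S.
Qed.

Lemma occurs_Tmap_Aseq n : occurs_at (Tmap C A1 y) (Aseq C y A1 n) 0.
Proof.
  intros i Hi. unfold Tmap. change (0 + i) with i.
  destruct (le_lt_dec n (S i)) as [H|H].
  - destruct (Aseq_prefix _ _ H) as [t Ht]. rewrite Ht, app_nth1; auto.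
  - destruct (Aseq_prefix (S i) n ltac:(lia)) as [t Ht]. rewrite Ht, app_nth1; auto.
    pose proof (alen_gt (S i)). unfold alen in *. lia.
Qed.

Lemma occurs_Aseq_S x n p : occurs_at x (Aseq C y A1 (S n)) p ->
  occurs_at x (Aseq C y A1 n) p /\ occurs_at x (Bword n) (p + alen n) /\
  occurs_at x (Aseq C y A1 n) (p + alen n + length (Bword n)).
Proof.
  rewrite Aseq_S. intros H. apply occurs_at_app in H. destruct H as [H1 H2].
  apply occurs_at_app in H2. destruct H2 as [H2 H3]. unfold alen. auto.
Qed.

Lemma occurs_Tmap_C n : occurs_at (Tmap C A1 y) (C n) (alen n).
Proof.
  destruct (occurs_Aseq_S _ n 0 (occurs_Tmap_Aseq (S n))) as (_ & HB & _).
  apply occurs_at_app in HB. tauto.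
Qed.

Lemma occurs_Tmap_Aseq_again n :
  occurs_at (Tmap C A1 y) (Aseq C y A1 n) (alen n + length (Bword n)).
Proof. apply (occurs_Aseq_S _ n 0 (occurs_Tmap_Aseq (S n))). Qed.

Lemma forbidden_word_rare (Pi : point -> Prop) W :
  (forall j p, Pi p -> Pi (shift_iter j p)) -> ~ contained Pi W ->
  (forall n, contained Pi (C n)) -> (forall n, contained Pi (first_syms y n)) ->
  forall D, exists K, forall s I, D * cnt_nat (occurs_at (Tmap C A1 y) W) s I <= I + K.
Proof.
  intros Pi_shift HW HC HY D. set (x := Tmap C A1 y). set (L := length W).
  set (m := 4 * D * L + 8 * D + 12 * D * L).
  assert (Ham : 8 * D + 12 * D * L <= alen m) by (pose proof (alen_gt m); unfold m in *; lia).
  assert (HB : forall n u, m <= n -> occurs_at x (Bword n) u ->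
                 sparse_block (occurs_at x W) (fun n => length (Bword n)) L D n u).
  { intros n u Hn Hu s e H1 H2 H3.
    apply (density_bound_rescale (S n)); [lia | unfold m in Hn; lia|].
    pose proof (cnt_forbidden_in_block Pi Pi_shift x W HW _ _ _ u s e (HY (S n)) (HC n) Hu H1 H2 H3)
      as Hblock.
    rewrite length_first_syms in Hblock. exact Hblock. }
  exists (D * alen m + 6 * D * L). intros s I.
  pose proof (alen_gt (m + s + I)).
  pose proof (window_density (occurs_at x W) alen (fun n => length (Bword n)) L D m
    alen_S sq_alen_le_Bword Ham (fun n p => occurs_at x (Aseq C y A1 n) p)
    (fun n u => occurs_at x (Bword n) u)
    (occurs_Aseq_S x) HB (m + s + I) ltac:(lia) 0 (occurs_Tmap_Aseq _) s (s + I)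
    ltac:(lia) ltac:(lia) ltac:(lia)) as G.
  unfold cnt_range in G. replace (s + I - s) with I in G by lia. exact G.
Qed.

End Construction.

Lemma word_over_repeat_word k w r : word_over k w -> word_over k (repeat_word w r).
Proof. intros H; induction r; simpl; [constructor | apply Forall_app; auto]. Qed.

Lemma word_over_first_syms k y n : InSigma k y -> word_over k (first_syms y n).
Proof.
  intros H. apply Forall_forall. intros a Ha.
  apply in_map_iff in Ha. destruct Ha as [i [<- _]]. apply H.
Qed.

Lemma word_over_Aseq k C y A1 n : word_over k A1 -> (forall n, word_over k (C n)) ->
  InSigma k y -> word_over k (Aseq C y A1 n).
Proof.
  intros HA HC Hy. induction n as [|n IHn]; [exact HA|].
  rewrite Aseq_S. unfold Bword, word_over in *.
  rewrite !Forall_app. repeat split; auto.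
  apply word_over_repeat_word, word_over_first_syms; auto.
Qed.

Lemma nth_word_over k w i : (0 < k)%nat -> word_over k w -> (nth i w 0 < k)%nat.
Proof.
  intros Hk Hw. destruct (Nat.lt_ge_cases i (length w)).
  - unfold word_over in Hw. rewrite Forall_forall in Hw. apply Hw, nth_In; auto.
  - rewrite nth_overflow; auto.
Qed.

Lemma lengths_bounded_below (C : nat -> word) N :
  exists M, forall c, (c < N)%nat -> (length (C c) <= M)%nat.
Proof.
  induction N as [|N [M HM]]; [exists 0%nat; lia|].
  exists (Nat.max M (length (C N))). intros c Hc.
  destruct (Nat.eq_dec c N) as [->|]; [lia|]. specialize (HM c ltac:(lia)). lia.
Qed.

Lemma shift_iter_closed (Pi : point -> Prop) : (forall x, Pi x -> Pi (shift x)) ->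
  forall j p, Pi p -> Pi (shift_iter j p).
Proof.
  intros Hs j. induction j as [|j IHj]; intros p Hp; [exact Hp|].
  replace (shift_iter (S j) p) with (shift (shift_iter j p)); [apply Hs, IHj; auto|].
  apply functional_extensionality. intros i. unfold shift, shift_iter. f_equal; lia.
Qed.

Lemma contained_first_syms (Pi : point -> Prop) z n : Pi z -> contained Pi (first_syms z n).
Proof. intros Hz. exists z. split; auto. apply is_prefix_first_syms. Qed.

Lemma forbidden_prefix_of_not_in k (Pi : point -> Prop) z :
  (forall x, InSigma k x ->
     (forall eps, 0 < eps -> exists p, Pi p /\ Defs.dist x p < eps) -> Pi x) ->
  InSigma k z -> ~ Pi z -> exists L, ~ contained Pi (first_syms z L).
Proof.
  intros Hclosed Hz Hnz. apply NNPP; intro Hall. apply Hnz, Hclosed; auto.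
  intros eps Heps. destruct (dist_lt_of_agree eps Heps) as [L HL].
  assert (Hc : contained Pi (first_syms z L)) by (apply NNPP; intro; apply Hall; eauto).
  destruct Hc as [p [Hp Hpre]]. exists p; split; auto.
  apply HL. intros i Hi. rewrite <- Hpre by (rewrite length_first_syms; auto).
  rewrite nth_first_syms; auto.
Qed.

Section Proposition.

Variables (k : nat) (Pi : point -> Prop) (C : nat -> word) (A1 : word) (y : point).
Hypothesis Pi_in_Sigma : forall x, Pi x -> InSigma k x.
Hypothesis Pi_closed : forall x, InSigma k x ->
  (forall eps, 0 < eps -> exists p, Pi p /\ Defs.dist x p < eps) -> Pi x.
Hypothesis Pi_shift : forall x, Pi x -> Pi (shift x).
Hypothesis C_words : forall n, word_over k (C n) /\ contained Pi (C n).
Hypothesis C_onto : forall w, word_over k w -> contained Pi w -> exists n, C n = w.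
Hypothesis A1_over : word_over k A1.
Hypothesis A1_forbidden : ~ contained Pi A1.
Hypothesis A1_nonnil : A1 <> nil.
Hypothesis y_in_Pi : Pi y.

Local Notation x := (Tmap C A1 y).

Lemma Tmap_in_Sigma : InSigma k x.
Proof.
  pose proof (Pi_in_Sigma y y_in_Pi 0%nat).
  intros i. apply nth_word_over; [lia|].
  apply word_over_Aseq; auto. intros n; apply C_words.
Qed.

Lemma Tmap_not_in_Pi : ~ Pi x.
Proof.
  intros HP. apply A1_forbidden. exists x. split; auto.
  intros i Hi. symmetry. apply (occurs_Tmap_Aseq C y A1 A1_nonnil 0 i Hi).
Qed.

Lemma Tmap_returns L N : exists q, (N <= q)%nat /\ forall i, (i < L)%nat -> x (q + i)%nat = x i.
Proof.
  set (n := (L + N)%nat). pose proof (alen_gt C y A1 A1_nonnil n).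
  exists (alen C y A1 n + length (Bword C y A1 n))%nat. split; [unfold n in *; lia|].
  intros i Hi.
  rewrite (occurs_Tmap_Aseq_again C y A1 A1_nonnil n i) by (unfold alen, n in *; lia).
  symmetry. apply (occurs_Tmap_Aseq C y A1 A1_nonnil n i). unfold alen, n in *; lia.
Qed.

Lemma omega_B_Tmap_in_Pi z : omega_B k x z -> Pi z.
Proof.
  intros [Hz Hpos]. apply NNPP; intro Hnz.
  destruct (forbidden_prefix_of_not_in k Pi z Pi_closed Hz Hnz) as [L HL].
  apply (upper_banach_not_pos (Nset x (Defs.ball k z (/ 2 ^ L)))).
  - intros D _.
    destruct (forbidden_word_rare C y A1 A1_nonnil Pi (first_syms z L)
                (shift_iter_closed Pi Pi_shift) HL (fun n => proj2 (C_words n))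
                (fun n => contained_first_syms Pi y n y_in_Pi) D) as [K HK].
    exists K. intros s I. eapply Nat.le_trans; [|apply HK].
    apply Nat.mul_le_mono_l, cnt_nat_mono. intros q _ [_ [_ Hq]] i Hi.
    rewrite length_first_syms in Hi. rewrite nth_first_syms by auto.
    apply (agree_of_dist_lt _ _ L Hq i Hi).
  - apply Hpos, Rinv_0_lt_compat, pow_lt; lra.
Qed.

(* Every prefix of z is some C_c, read at position |A_c|; long prefixes force c to be late. *)
Lemma omega_sigma_Tmap_of_Pi z : Pi z -> omega_sigma k x z.
Proof.
  intros Hz. split; [auto|]. intros eps Heps N.
  destruct (dist_lt_of_agree eps Heps) as [L HL].
  destruct (lengths_bounded_below C N) as [M HM].
  destruct (C_onto (first_syms z (L + M + 1))) as [c Hc].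
  { apply word_over_first_syms; auto. }
  { apply contained_first_syms; auto. }
  assert (HNc : (N <= c)%nat).
  { destruct (le_lt_dec N c) as [|Hlt]; auto.
    specialize (HM c Hlt). rewrite Hc, length_first_syms in HM. lia. }
  pose proof (alen_gt C y A1 A1_nonnil c).
  exists (alen C y A1 c). split; [lia|]. apply HL. intros i Hi. unfold shift_iter.
  rewrite (occurs_Tmap_C C y A1 A1_nonnil c i) by (rewrite Hc, length_first_syms; lia).
  rewrite Hc, nth_first_syms by lia. reflexivity.
Qed.

Lemma omega_sigma_Tmap_self : omega_sigma k x x.
Proof.
  split; [apply Tmap_in_Sigma|]. intros eps Heps N.
  destruct (dist_lt_of_agree eps Heps) as [L HL]. destruct (Tmap_returns L N) as [q [Hq Hret]].
  exists q. split; auto.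
Qed.

Lemma Tmap_Rec : Rec k x.
Proof.
  split; [apply Tmap_in_Sigma|]. intros eps Heps.
  destruct (dist_lt_of_agree eps Heps) as [L HL]. destruct (Tmap_returns L 1) as [q [Hq Hret]].
  exists q. split; [lia|]. split; auto. intros i. apply Tmap_in_Sigma.
Qed.

Lemma Tmap_not_BR : ~ BR k x.
Proof.
  intros [_ Hb]. apply Tmap_not_in_Pi, omega_B_Tmap_in_Pi. split; [apply Tmap_in_Sigma | exact Hb].
Qed.

End Proposition.

Theorem proposition3p2
  (k : nat) (Pi : point -> Prop) (C : nat -> word) (A1 : word) (y : point) :
  (2 <= k)%nat ->
  proper_subshift k Pi ->
  (* C enumerates all finite words contained in Pi *)
  (forall n, word_over k (C n) /\ contained Pi (C n)) ->
  (forall w, word_over k w -> contained Pi w -> exists n, C n = w) ->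
  (forall n m, C n = C m -> n = m) ->
  (* A_1 is a finite word not contained in Pi *)
  word_over k A1 -> ~ contained Pi A1 ->
  Pi y ->
  (* the construction requires |C_n| = o(|A_n|) *)
  is_lim_seq (fun n => INR (length (C n)) / INR (length (Aseq C y A1 n))) 0 ->
  (forall z, omega_B k (Tmap C A1 y) z -> Pi z) /\
  (forall z, Pi z -> omega_sigma k (Tmap C A1 y) z) /\
  (exists z, omega_sigma k (Tmap C A1 y) z /\ ~ Pi z) /\
  Rec k (Tmap C A1 y) /\ ~ BR k (Tmap C A1 y).
Proof.
  intros _ [[HPk [[p0 Hp0] [Hclosed Hshift]]] _] HC HCall _ HA1w HA1 Hy _.
  assert (HA1nil : A1 <> nil).
  { intros ->. apply HA1. exists p0. split; auto. intros i Hi; simpl in Hi; lia. }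
  split; [|split; [|split; [|split]]].
  - intros z. apply omega_B_Tmap_in_Pi; auto.
  - intros z. apply omega_sigma_Tmap_of_Pi; auto.
  - exists (Tmap C A1 y). split.
    + apply omega_sigma_Tmap_self with Pi; auto.
    + apply Tmap_not_in_Pi; auto.
  - apply Tmap_Rec with Pi; auto.
  - apply Tmap_not_BR with Pi; auto.
Qed.
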